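(* Let $\Lambda=k(\Gamma,\mathcal{A})$ be a generalized path algebra without relations. Let $i\in\Gamma_0$, $1\le j\le s_i$, and let $((M_l)_{l\in\Gamma_0},(\phi_\alpha)_{\alpha\in\Gamma_1})$ be the representation of the indecomposable injective $I(i,j)=D(\Lambda\overline{e_{ij}})$. Then: - $M_i=I_i^j=D(A_ie_{ij})$; - for $l\ne i$, $M_l\cong(D A_l)^{n_l}$ as $A_l$-modules, where $$n_l=\sum_{\gamma:\,l=i_0\to i_1\to\cdots\to i_r=i}(\dim_kA_{i_1})\cdots(\dim_kA_{i_{r-1}})(\dim_kI_i^j),$$ summed over all paths $\gamma$ from $l$ to $i$ in $\Gamma$. In particular $M_l=0$ if there is no path from $l$ to $i$.
   Context: $k$ is an algebraically closed field, $\Gamma$ a finite acyclic quiver, and $\mathcal{A}=\{A_i:i\in\Gamma_0\}$ finite-dimensional basic $k$-algebras. The generalized path algebra $k(\Gamma,\mathcal{A})$ is spanned by $\mathcal{A}$-paths $a_1\beta_1\cdots a_n\beta_na_{n+1}$ ($\beta_1\cdots\beta_n$ a path of $\Gamma$, $a_i\in A_{s(\beta_i)}$, $a_{n+1}\in A_{e(\beta_n)}$), modulo multilinearity, with concatenation product (multiplying adjacent algebra entries, or $0$ if paths don't compose). For each $i$, $\{e_{i1},\dots,e_{is_i}\}$ is a complete set of primitive pairwise orthogonal idempotents of $A_i$, and $\overline{e_{ij}}$ is the class of $e_{ij}$ in $\Lambda$. $D=\operatorname{Hom}_k(-,k)$. The representation of a right $\Lambda$-module $X$ has $X_l=X\cdot1_l$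 ($1_l$ the identity of $A_l$) and $\phi_\alpha(x)=x\alpha$. *)

From HB Require Import structures.
From mathcomp Require Import all_boot all_order all_algebra all_field.
Set Implicit Arguments. Unset Strict Implicit. Unset Printing Implicit Defensive.
Import GRing.Theory.

Fixpoint path_ok (V E : eqType) (src tgt : E -> V) (v : V) (s : seq E) : bool :=
  match s with
  | [::] => true
  | b :: s' => (src b == v) && path_ok src tgt (tgt b) s'
  end.

Definition path_end (V E : Type) (tgt : E -> V) (v : V) (s : seq E) : V :=
  last v (map tgt s).

Definition acyclic (V E : eqType) (src tgt : E -> V) : Prop :=
  forall (v : V) (s : seq E),
    path_ok src tgt v s -> path_end tgt v s = v -> s = [::].

(* Isomorphism of (right) modules over a set of scalars A, given by
   k-vector spaces M, N with actions of A: a k-linear bijection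
   commuting with the actions. *)
Definition rmod_iso (k : fieldType) (A : Type) (M N : vectType k)
    (actM : M -> A -> M) (actN : N -> A -> N) : Prop :=
  exists f : 'Hom(M, N),
    bijective f /\ forall (m : M) (a : A), f (actM m a) = actN (f m) a.

Local Open Scope ring_scope.

Definition eA (k : fieldType) (A : falgType k) (e : A) : {vspace A} :=
  limg (amull e).
Definition eA_act (k : fieldType) (A : falgType k) (e : A)
    (m : subvs_of (eA e)) (a : A) : subvs_of (eA e) :=
  vsproj (eA e) (vsval m * a).

Definition Ae (k : fieldType) (A : falgType k) (e : A) : {vspace A} :=
  limg (amulr e).

Definition DAe (k : fieldType) (A : falgType k) (e : A) : vectType k :=
  'Hom(subvs_of (Ae e), k^o).
Definition DAe_act (k : fieldType) (A : falgType k) (e : A)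
    (g : DAe e) (a : A) : DAe e :=
  linfun (fun y : subvs_of (Ae e) => g (vsproj (Ae e) (a * vsval y))).

Definition DA (k : fieldType) (A : falgType k) : vectType k := 'Hom(A, k^o).
Definition DA_act (k : fieldType) (A : falgType k) (g : DA A) (a : A) : DA A :=
  linfun (fun y : A => g (a * y)).

Definition DAn (k : fieldType) (A : falgType k) (n : nat) : vectType k :=
  {ffun 'I_n -> DA A}.
Definition DAn_act (k : fieldType) (A : falgType k) (n : nat)
    (g : DAn A n) (a : A) : DAn A n :=
  [ffun t => DA_act (g t) a].

Definition primitive_idem (k : fieldType) (A : falgType k) (x : A) : Prop :=
  [/\ x * x = x, x != 0 &
      forall y z : A, y * y = y -> z * z = z -> y * z = 0 -> z * y = 0 ->
        x = y + z -> y = 0 \/ z = 0].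

Definition complete_prim_idems (k : fieldType) (A : falgType k) (s : nat)
    (e : 'I_s -> A) : Prop :=
  [/\ forall j, primitive_idem (e j),
      forall j j', j != j' -> e j * e j' = 0 &
      \sum_(j < s) e j = 1].

Definition basic_wrt (k : fieldType) (A : falgType k) (s : nat)
    (e : 'I_s -> A) : Prop :=
  forall j j' : 'I_s, j != j' -> ~ rmod_iso (@eA_act k A (e j)) (@eA_act k A (e j')).

(* The A-paths  iota(x_0) beta_1 iota(x_1) ... beta_r iota(x_r)  along the
   arrows s starting at v, with each x_m running through the chosen basis
   (vbasis) of the algebra at the m-th vertex of the path. *)
Fixpoint apaths (k : fieldType) (V E : finType) (tgt : E -> V)
    (A : V -> falgType k) (L : falgType k) (iota : forall v, A v -> L)
    (arr : E -> L) (v : V) (s : seq E) : seq L :=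
  match s with
  | [::] => [seq iota v x | x <- vbasis (fullv : {vspace A v})]
  | b :: s' => [seq iota v x * arr b * y
               | x <- vbasis (fullv : {vspace A v}),
                 y <- apaths tgt iota arr (tgt b) s']
  end.

(* all A-paths (over all paths of the quiver; in an acyclic quiver every
   path has length < #|V|) *)
Definition all_apaths (k : fieldType) (V E : finType) (src tgt : E -> V)
    (A : V -> falgType k) (L : falgType k) (iota : forall v, A v -> L)
    (arr : E -> L) : seq L :=
  \big[cat/[::]]_(v : V) \big[cat/[::]]_(n < #|V|)
     \big[cat/[::]]_(t : n.-tuple E | path_ok src tgt v t)
        apaths tgt iota arr v t.

(* (L, iota, arr) is the generalized path algebra k(Gamma, A) (without
   relations): iota v : A_v -> L is the inclusion a |-> (trivial A-path a),
   arr b is the arrow b, the classes 1_v = iota v 1 are orthogonal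
   idempotents summing to 1, arrows go from 1_{src} to 1_{tgt}, and the
   A-paths with entries running through bases form a basis of L
   (i.e. L = (+)_{paths} A_{i_0} (x) ... (x) A_{i_r}, with concatenation
   product). *)
Definition gen_path_algebra (k : fieldType) (V E : finType) (src tgt : E -> V)
    (A : V -> falgType k) (L : falgType k) (iota : forall v, A v -> L)
    (arr : E -> L) : Prop :=
  [/\ (forall v (c : k) (x y : A v), iota v (c *: x + y) = c *: iota v x + iota v y)
      /\ (forall v (x y : A v), iota v (x * y) = iota v x * iota v y),
      forall v w, v != w -> iota v 1 * iota w 1 = 0,
      \sum_(v : V) iota v 1 = 1,
      forall b, iota (src b) 1 * arr b = arr b /\ arr b * iota (tgt b) 1 = arr b &
      basis_of fullv (all_apaths src tgt iota arr)].

Definition Xinj (k : fieldType) (L : falgType k) (eb : L) : vectType k :=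
  DAe eb.
Definition Xinj_act (k : fieldType) (L : falgType k) (eb : L)
    (f : Xinj eb) (lam : L) : Xinj eb := DAe_act f lam.

(* M_l = X . 1_l, with 1_l = iota l 1 *)
Definition rep_space (k : fieldType) (L : falgType k) (eb one_l : L)
    : {vspace Xinj eb} :=
  limg (linfun (fun f : Xinj eb => Xinj_act f one_l)).

Definition rep_act (k : fieldType) (V : finType) (A : V -> falgType k)
    (L : falgType k) (iota : forall v, A v -> L) (eb : L) (l : V)
    (m : subvs_of (rep_space eb (iota l 1))) (a : A l)
    : subvs_of (rep_space eb (iota l 1)) :=
  vsproj (rep_space eb (iota l 1)) (Xinj_act (vsval m) (iota l a)).

(* n_l = sum over paths l = i_0 -> ... -> i_r = i of
   dim A_{i_1} ... dim A_{i_{r-1}} * dI   (paths of length < #|V|, which in an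
   acyclic quiver are all paths) *)
Definition mult_nl (k : fieldType) (V E : finType) (src tgt : E -> V)
    (A : V -> falgType k) (l i : V) (dI : nat) : nat :=
  (\sum_(n < #|V|) \sum_(t : n.-tuple E | path_ok src tgt l t && (path_end tgt l t == i))
     (\prod_(b <- take n.-1 t) \dim (fullv : {vspace A (tgt b)})) * dI)%N.

(* Restricting functionals on L eb to the corner 1_l L eb identifies the space
   M_l = D(L eb) 1_l of the representation with the dual of that corner, a left
   A_l-module.  The basis of A-paths describes the corner: A-paths from l that
   do not end at i are killed by eb, so it is spanned by the products
   iota(x) q iota(z eb) along the paths from l to i, where q runs through the
   middle parts of the path.  For l = i acyclicity leaves only the trivial path
   and the corner is A_i e; for l <> i these products are independent, so the
   corner is free of rank n_l over A_l and its dual is (D A_l)^(n_l); with no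
   path from l to i the corner, hence M_l, is zero. *)

From HB Require Import structures.
From mathcomp Require Import all_boot all_order all_algebra all_field zify.
Set Implicit Arguments. Unset Strict Implicit. Unset Printing Implicit Defensive.
Import GRing.Theory.
Local Open Scope ring_scope.

Lemma linfun_linearE (k : fieldType) (U W : vectType k) (f : U -> W) :
  linear f -> forall x, linfun f x = f x.
Proof.
move=> f_lin x.
exact: (lfunE (HB.pack f (GRing.isLinear.Build k U W *:%R f f_lin)) x).
Qed.

Lemma mul_lr_linear (k : fieldType) (B : falgType k) (a c : B) :
  linear (fun x : B => a * x * c).
Proof. by move=> t x y; rewrite mulrDr mulrDl -scalerAr -scalerAl. Qed.

Lemma lker0_limgf_bij (k : fieldType) (U W : vectType k) (f : 'Hom(U, W)) :
  lker f == 0%VS -> limg f == fullv -> bijective f.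
Proof.
move=> /lker0_lfunK fK /eqP f_onto; exists (f^-1)%VF => // x.
by apply: limg_lfunVK; rewrite f_onto memvf.
Qed.

Lemma free_map_basis_inj (k : fieldType) (U W : vectType k) (f : U -> W) (X : seq U) :
  linear f -> basis_of fullv X -> free (map f X) -> injective f.
Proof.
move=> f_lin X_basis fX_free.
pose F := linfun f; have FE x : F x = f x by rewrite linfun_linearE.
suff /lker0P F_inj : lker F == 0%VS by move=> x y; rewrite -!FE => /F_inj.
have := limg_ker_dim F fullv; rewrite capfv.
have -> : (F @: fullv)%VS = <<map f X>>%VS.
  by rewrite -(span_basis X_basis) limg_span (eq_map FE).
rewrite (eqnP fX_free) size_map -(eqnP (basis_free X_basis)) (span_basis X_basis).
by rewrite -dimv_eq0; lia.
Qed.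

Lemma free_flatten_map_filter (k : fieldType) (W : vectType k) (I : eqType)
    (F : I -> seq W) (r : seq I) (P : pred I) :
  free (flatten (map F r)) -> free (flatten (map F (filter P r))).
Proof.
have r_perm : perm_eq (filter P r ++ filter (predC P) r) r by rewrite perm_filterC.
rewrite -(perm_free (perm_flatten (perm_map F r_perm))).
by rewrite map_cat flatten_cat => /catl_free.
Qed.

Lemma free_flatten_map_mem (k : fieldType) (W : vectType k) (I : eqType)
    (F : I -> seq W) (r : seq I) (x : I) :
  x \in r -> free (flatten (map F r)) -> free (F x).
Proof.
move=> xr; rewrite (perm_free (perm_flatten (perm_map F (perm_to_rem xr)))).
by move/catl_free.
Qed.

Lemma mem_big_cat (I : finType) (T : eqType) (P : pred I) (F : I -> seq T) x y :
  P x -> y \in F x -> y \in \big[cat/[::]]_(i | P i) F i.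
Proof.
move=> Px yF; elim: (index_enum I) (mem_index_enum x) => [//|a r IH].
rewrite inE big_cons => /orP[/eqP <- | xr]; first by rewrite Px mem_cat yF.
by case: (P a); rewrite ?mem_cat IH ?orbT.
Qed.

Lemma free_tensor_eq0 (k : fieldType) (U W : vectType k) n (Z : n.-tuple U)
    (f : 'I_n -> W) : free Z ->
  (forall c', \sum_(c < n) coord (vbasis {:U}) c' Z`_c *: f c = 0) ->
  forall c, f c = 0.
Proof.
move=> Z_free f_eq0 c; rewrite (coord_vbasis (memvf (f c))) big1 // => a _.
suff -> : coord (vbasis {:W}) a (f c) = 0 by rewrite scale0r.
apply: (vector.freeP Z_free (fun c => coord (vbasis {:W}) a (f c))) => /=.
under eq_bigr => c1 _ do rewrite [Z`_c1](coord_vbasis (memvf _)) scaler_sumr.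
rewrite exchange_big /= big1 // => c' _.
under eq_bigr => c1 _ do rewrite scalerA.
rewrite -scaler_suml (_ : \sum_(c1 < n) _ =
    coord (vbasis {:W}) a (\sum_(c < n) coord (vbasis {:U}) c' Z`_c *: f c)).
  by rewrite f_eq0 linear0 scale0r.
by rewrite linear_sum; apply: eq_bigr => c1 _; rewrite linearZ /= mulrC.
Qed.

Section LeftIdeal.
Variables (k : fieldType) (B : falgType k) (eb : B).

Lemma AeP z : reflect (exists x, z = x * eb) (z \in Ae eb).
Proof.
apply: (iffP memv_imgP) => [[x _ ->]|[x ->]]; first by exists x; rewrite lfunE.
by exists x; rewrite ?memvf ?lfunE.
Qed.

Lemma memv_mul_Ae x : x * eb \in Ae eb.
Proof. by apply/AeP; exists x. Qed.

Lemma memv_Ae_mull a z : z \in Ae eb -> a * z \in Ae eb.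
Proof. by case/AeP=> x ->; rewrite mulrA memv_mul_Ae. Qed.

End LeftIdeal.

Section InjectiveModule.
Variables (k : fieldType) (L : falgType k) (eb : L).

Lemma Xinj_actE (g : Xinj eb) lam y :
  Xinj_act g lam y = g (vsproj (Ae eb) (lam * vsval y)).
Proof.
rewrite /Xinj_act /DAe_act linfun_linearE // => t x y'.
by rewrite !linearP /= mulrDr -scalerAr !linearP.
Qed.

Lemma Xinj_act_linear lam : linear (fun f : Xinj eb => Xinj_act f lam).
Proof.
move=> t f g; apply/lfunP => y.
by rewrite add_lfunE scale_lfunE !Xinj_actE add_lfunE scale_lfunE.
Qed.

Lemma Xinj_actM (g : Xinj eb) a b : Xinj_act (Xinj_act g a) b = Xinj_act g (a * b).
Proof.
apply/lfunP => y; rewrite !Xinj_actE vsprojK ?mulrA //.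
exact/memv_Ae_mull/subvsP.
Qed.

Lemma rep_spaceP lam f :
  reflect (exists g, f = Xinj_act g lam) (f \in rep_space eb lam).
Proof.
have actE g : linfun (fun f : Xinj eb => Xinj_act f lam) g = Xinj_act g lam.
  by rewrite linfun_linearE //; apply: Xinj_act_linear.
apply: (iffP memv_imgP) => [[g _ ->]|[g ->]]; first by exists g; rewrite actE.
by exists g; rewrite ?memvf ?actE.
Qed.

End InjectiveModule.

Definition dual_act (k : fieldType) (B : Type) (N : vectType k)
    (actN : B -> N -> N) (h : 'Hom(N, k^o)) (a : B) : 'Hom(N, k^o) :=
  linfun (fun y => h (actN a y)).

Lemma dual_actE (k : fieldType) (B : Type) (N : vectType k)
    (actN : B -> N -> N) (h : 'Hom(N, k^o)) (a : B) y :
  linear (actN a) -> dual_act actN h a y = h (actN a y).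
Proof. by move=> act_lin; rewrite linfun_linearE // => c y1 y2; rewrite act_lin linearP. Qed.

Lemma DA_actE (k : fieldType) (B : falgType k) (g : DA B) a y : DA_act g a y = g (a * y).
Proof. by apply: dual_actE => c y1 y2; rewrite mulrDr scalerAr. Qed.

Lemma dim_DAe (k : fieldType) (B : falgType k) (e : B) : \dim {:DAe e} = \dim (Ae e).
Proof. by rewrite dimvf /dim /= muln1. Qed.

Definition ffun_act (I : finType) (B W : Type) (act : W -> B -> W)
    (g : {ffun I -> W}) (a : B) : {ffun I -> W} :=
  [ffun t => act (g t) a].

Lemma rmod_iso_trans (k : fieldType) (B : Type) (M1 M2 M3 : vectType k)
    (act1 : M1 -> B -> M1) (act2 : M2 -> B -> M2) (act3 : M3 -> B -> M3) :
  rmod_iso act1 act2 -> rmod_iso act2 act3 -> rmod_iso act1 act3.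
Proof.
move=> [f [f_bij f_act]] [g [g_bij g_act]]; exists (g \o f)%VF; split.
  by apply: (eq_bij (bij_comp g_bij f_bij)) => x; rewrite comp_lfunE.
by move=> m a; rewrite !comp_lfunE f_act g_act.
Qed.

Lemma ffun_reindex_iso (k : fieldType) (B : Type) (W : vectType k)
    (act : W -> B -> W) (I J : finType) (f : J -> I) :
  bijective f -> rmod_iso (ffun_act (I := I) act) (ffun_act (I := J) act).
Proof.
case=> f' fK f'K.
pose R (g : {ffun I -> W}) : {ffun J -> W} := [ffun t => g (f t)].
have R_lin : linear R by move=> c g h; apply/ffunP => t; rewrite !ffunE.
have RE := linfun_linearE R_lin.
exists (linfun R); split.
  apply: eq_bij (fun g => esym (RE g)).
  exists (fun g : {ffun J -> W} => [ffun t => g (f' t)]) => g; apply/ffunP => t.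
    by rewrite !ffunE f'K.
  by rewrite !ffunE fK.
by move=> g a; rewrite !RE; apply/ffunP => t; rewrite !ffunE.
Qed.

Lemma ffun_reindex_card_iso (k : fieldType) (B : Type) (W : vectType k)
    (act : W -> B -> W) (I : finType) n :
  #|I| = n -> rmod_iso (ffun_act (I := I) act) (ffun_act (I := 'I_n) act).
Proof.
move=> card_I.
apply: (@ffun_reindex_iso _ _ _ act _ _ (fun t => enum_val (cast_ord (esym card_I) t))).
exists (fun x => cast_ord card_I (enum_rank x)) => [t|x].
  by rewrite enum_valK cast_ordKV.
by rewrite cast_ordK enum_rankK.
Qed.

Section DualOfFreeModule.
Variables (k : fieldType) (B : falgType k) (I : finType).

Definition ffun_delta (t : I) (x : B) : {ffun I -> B} :=
  [ffun t' => if t' == t then x else 0].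

Lemma ffun_delta_linear t : linear (ffun_delta t).
Proof.
move=> c x y; apply/ffunP => t'; rewrite !ffunE.
by case: eqP; rewrite ?scaler0 ?addr0.
Qed.

Lemma ffun_sum_delta (y : {ffun I -> B}) : \sum_t ffun_delta t (y t) = y.
Proof.
apply/ffunP => t'; rewrite sum_ffunE (bigD1 t') //= ffunE eqxx big1 ?addr0 //.
by move=> t t_neq; rewrite ffunE eq_sym (negbTE t_neq).
Qed.

Definition ffun_lmul (a : B) (y : {ffun I -> B}) : {ffun I -> B} := [ffun t => a * y t].

Lemma ffun_lmul_linear a : linear (ffun_lmul a).
Proof. by move=> c y1 y2; apply/ffunP => t; rewrite !ffunE mulrDr scalerAr. Qed.

Lemma dual_ffun_iso : rmod_iso (dual_act ffun_lmul) (ffun_act (I := I) (@DA_act k B)).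
Proof.
pose delta t : 'Hom(B, {ffun I -> B}) := linfun (ffun_delta t).
have deltaE t x : delta t x = ffun_delta t x by rewrite linfun_linearE //; apply: ffun_delta_linear.
pose proj t : 'Hom({ffun I -> B}, B) := linfun (fun y : {ffun I -> B} => y t).
have projE t y : proj t y = y t by rewrite linfun_linearE // => c y1 y2; rewrite !ffunE.
pose G0 (h : 'Hom({ffun I -> B}, k^o)) : {ffun I -> DA B} := [ffun t => (h \o delta t)%VF].
have G0_lin : linear G0.
  by move=> c h1 h2; apply/ffunP => t; rewrite !ffunE comp_lfunDl comp_lfunZl.
have GE := linfun_linearE G0_lin.
exists (linfun G0); split.
  apply: eq_bij (fun h => esym (GE h)).
  exists (fun g : {ffun I -> DA B} => \sum_t (g t \o proj t)%VF) => [h|g].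
    apply/lfunP => y; rewrite sum_lfunE.
    under eq_bigr => t _ do rewrite comp_lfunE projE ffunE comp_lfunE deltaE.
    by rewrite -linear_sum ffun_sum_delta.
  apply/ffunP => t; apply/lfunP => x; rewrite ffunE comp_lfunE deltaE sum_lfunE.
  rewrite (bigD1 t) //= comp_lfunE projE ffunE eqxx big1 ?addr0 // => t' t'_neq.
  by rewrite comp_lfunE projE ffunE (negbTE t'_neq) linear0.
move=> h a; rewrite !GE; apply/ffunP => t; apply/lfunP => x.
rewrite /ffun_act !ffunE DA_actE !comp_lfunE !deltaE dual_actE; last exact: ffun_lmul_linear.
congr (h _); apply/ffunP => t'; rewrite !ffunE.
by case: eqP; rewrite ?mulr0.
Qed.

End DualOfFreeModule.

Section GenPathAlgebra.
Variables (k : fieldType) (V E : finType) (src tgt : E -> V).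
Variables (A : V -> falgType k) (L : falgType k).
Variables (iota : forall v, A v -> L) (arr : E -> L).
Arguments iota : clear implicits.
Hypothesis HL : gen_path_algebra src tgt iota arr.

Lemma iota_linear v : linear (iota v).
Proof. by case: HL => [[iota_lin _] _ _ _ _] c x y; rewrite iota_lin. Qed.

HB.instance Definition _ v := GRing.isLinear.Build k (A v) L *:%R (iota v) (@iota_linear v).

Lemma iotaM v : {morph iota v : x y / x * y}.
Proof. by case: HL => [[_ iotaM] _ _ _ _]. Qed.

Lemma iota1l v x : iota v 1 * iota v x = iota v x.
Proof. by rewrite -iotaM mul1r. Qed.

Lemma iota1r v x : iota v x * iota v 1 = iota v x.
Proof. by rewrite -iotaM mulr1. Qed.

Lemma iota_mul_eq0 v w x y : v != w -> iota v x * iota w y = 0.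
Proof.
case: HL => [_ orth _ _ _] vw.
by rewrite -(iota1r x) -(iota1l y) mulrA -(mulrA (iota v x)) orth // mulr0 mul0r.
Qed.

(* [middles s] lists the products b_1 x_1 b_2 ... x_(r-1) b_r along the arrows
   s = b_1 ... b_r, with x_m running through the basis of the algebra at the
   m-th inner vertex: the A-paths along a nonempty s are the iota(x) q iota(z). *)
Fixpoint middles (s : seq E) : seq L :=
  match s with
  | [::] => [:: 1]
  | b :: s' => if s' is _ :: _ then
      [seq arr b * iota (tgt b) x * q | x <- vbasis {:A (tgt b)}, q <- middles s']
    else [:: arr b]
  end.

Lemma size_middles s :
  size (middles s) = (\prod_(b <- take (size s).-1 s) \dim {:A (tgt b)})%N.
Proof.
elim: s => [|b [|b' s] IH] /=; rewrite ?big_nil //.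
by rewrite size_allpairs size_tuple IH big_cons.
Qed.

Lemma mem_apaths v w s a : path_end tgt v s = w -> s != [::] ->
  a \in apaths tgt iota arr v s ->
  exists x z q, [/\ x \in vbasis {:A v}, q \in middles s, z \in vbasis {:A w} &
                  a = iota v x * q * iota w z].
Proof.
move=> <-; elim: s v a => [//|b s IH] v a _ /=.
case/allpairsP => -[x y] /= [x_in y_in ->].
case: s IH y_in => [|b' s] IH y_in.
  by case/mapP: y_in => z z_in ->; exists x, z, (arr b); rewrite mem_seq1.
have [x' [z [q [x'_in q_in z_in ->]]]] := IH _ _ isT y_in.
exists x, z, (arr b * iota (tgt b) x' * q); split => //; last by rewrite !mulrA.
by apply: (allpairs_f (fun x q => arr b * iota (tgt b) x * q)).
Qed.

Lemma size_apaths v s : s != [::] ->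
  size (apaths tgt iota arr v s) =
    (\dim {:A v} * size (middles s) * \dim {:A (path_end tgt v s)})%N.
Proof.
elim: s v => [//|b [|b' s] IH] v _ /=; rewrite size_allpairs size_tuple.
  by rewrite size_map size_tuple muln1.
by rewrite IH // size_allpairs size_tuple !mulnA.
Qed.

Lemma apaths_mul_eq0 v s a w z : a \in apaths tgt iota arr v s ->
  path_end tgt v s != w -> a * iota w z = 0.
Proof.
case: s => [|b s] a_in end_neq.
  by case/mapP: a_in => x _ ->; rewrite iota_mul_eq0.
have [x [z' [q [_ _ _ ->]]]] := mem_apaths (s := b :: s) erefl isT a_in.
by rewrite -mulrA iota_mul_eq0 ?mulr0.
Qed.

Lemma iota1_mul_apaths_eq0 v s a l : a \in apaths tgt iota arr v s ->
  l != v -> iota l 1 * a = 0.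
Proof.
case: s => [|b s] /= a_in lv.
  by case/mapP: a_in => x _ ->; rewrite iota_mul_eq0.
by case/allpairsP: a_in => -[x y] /= [_ _ ->]; rewrite !mulrA iota_mul_eq0 ?mul0r.
Qed.

Definition quiver_paths : seq (V * seq E) :=
  \big[cat/[::]]_(v : V) \big[cat/[::]]_(n < #|V|)
     \big[cat/[::]]_(t : n.-tuple E | path_ok src tgt v t) [:: (v, val t)].

Definition apaths_of (x : V * seq E) := apaths tgt iota arr x.1 x.2.

Lemma all_apathsE : all_apaths src tgt iota arr = flatten (map apaths_of quiver_paths).
Proof.
have flatten_cat : {morph (fun r => flatten (map apaths_of r)) : r r' / r ++ r' >-> r ++ r'}.
  by move=> r r'; rewrite map_cat flatten_cat.
have flatten_nil : flatten (map apaths_of [::]) = [::] by [].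
rewrite /quiver_paths (big_morph _ flatten_cat flatten_nil).
apply: eq_bigr => v _; rewrite (big_morph _ flatten_cat flatten_nil).
apply: eq_bigr => n _; rewrite (big_morph _ flatten_cat flatten_nil).
by apply: eq_bigr => t _ /=; rewrite cats0.
Qed.

Lemma apaths_basis : basis_of fullv (flatten (map apaths_of quiver_paths)).
Proof. by rewrite -all_apathsE; case: HL. Qed.

Lemma quiver_paths_ok x : x \in quiver_paths -> path_ok src tgt x.1 x.2.
Proof.
pose P r := all (fun x : V * seq E => path_ok src tgt x.1 x.2) r.
have P_cat r r' : P r -> P r' -> P (r ++ r') by rewrite /P all_cat => -> ->.
suff : P quiver_paths by move/allP; apply.
apply: (big_ind P) => // v _; apply: (big_ind P) => // n _.
by apply: (big_ind P) => // t t_ok; rewrite /P /= t_ok.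
Qed.

Lemma mem_quiver_paths v n (t : n.-tuple E) : (n < #|V|)%N ->
  path_ok src tgt v t -> (v, val t) \in quiver_paths.
Proof.
move=> n_lt t_ok; apply: (mem_big_cat (x := v)) => //.
apply: (mem_big_cat (x := Ordinal n_lt)) => //.
by apply: (mem_big_cat (x := t)); rewrite ?mem_seq1.
Qed.

Lemma iota_inj v : injective (iota v).
Proof.
apply: (free_map_basis_inj (@iota_linear v) (vbasisP {:A v})).
have v_in : (v, [::]) \in quiver_paths.
  have V_gt0 : (0 < #|V|)%N by apply/card_gt0P; exists v.
  exact: (mem_quiver_paths (t := [tuple]) V_gt0).
exact: (free_flatten_map_mem v_in (basis_free apaths_basis)).
Qed.

Lemma corner_mem (l i : V) (z : A i) (W : {vspace L}) :
  (forall s a, (l, s) \in quiver_paths -> path_end tgt l s = i ->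
     a \in apaths tgt iota arr l s -> iota l 1 * a * iota i z \in W) ->
  forall x, iota l 1 * x * iota i z \in W.
Proof.
move=> W_paths x.
have mulE := linfun_linearE (mul_lr_linear (iota l 1) (iota i z)).
suff : x \in (linfun (fun x => iota l 1 * x * iota i z) @^-1: W)%VS.
  by rewrite -memv_preim mulE.
apply: subvP (memvf x); rewrite -(span_basis apaths_basis); apply/span_subvP.
move=> a /flatten_mapP[[v s] vs_in a_in]; rewrite -memv_preim mulE.
have [lv|lv] := eqVneq l v; last first.
  by rewrite (iota1_mul_apaths_eq0 a_in lv) mul0r mem0v.
subst v; have [s_end|s_end] := eqVneq (path_end tgt l s) i.
  exact: W_paths vs_in s_end a_in.
by rewrite -mulrA (apaths_mul_eq0 z a_in s_end) mulr0 mem0v.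
Qed.

(* [phi] identifies [N] with the corner [1_l L eb]; restricting the functionals
   on [L eb] to that corner is the isomorphism [M_l = D(L eb) 1_l ~ D N]. *)
Section CornerDual.
Variables (l : V) (eb : L) (N : vectType k) (actN : A l -> N -> N) (phi : 'Hom(N, L)).
Hypothesis actN_linear : forall a, linear (actN a).
Hypothesis phi_lker0 : lker phi == 0%VS.
Hypothesis phi_actN : forall a y, phi (actN a y) = iota l a * phi y.
Hypothesis phi_Ae : forall y, phi y \in Ae eb.
Hypothesis phi_corner : forall y, iota l 1 * phi y = phi y.
Hypothesis phi_onto : forall x, iota l 1 * x * eb \in limg phi.

Let M := subvs_of (rep_space eb (iota l 1)).

Definition corner_restr : 'Hom(M, 'Hom(N, k^o)) :=
  linfun (fun m : M => (vsval m \o linfun (vsproj (Ae eb)) \o phi)%VF).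

Lemma corner_restrE m y : corner_restr m y = vsval m (vsproj (Ae eb) (phi y)).
Proof.
rewrite linfun_linearE ?comp_lfunE ?lfunE // => c m1 m2.
by rewrite linearP !comp_lfunDl -!comp_lfunZl.
Qed.

Lemma corner_restr_act m g y : vsval m = Xinj_act g (iota l 1) ->
  corner_restr m y = g (vsproj (Ae eb) (phi y)).
Proof. by move=> m_g; rewrite corner_restrE m_g Xinj_actE vsprojK ?phi_corner. Qed.

Lemma corner_restr_lker0 : lker corner_restr == 0%VS.
Proof.
apply/eqP/vspaceP => m; rewrite memv_ker memv0.
apply/eqP/eqP => [restr0|->]; last exact: linear0.
rewrite -(vsvalK m); suff -> : vsval m = 0 by rewrite linear0.
case/rep_spaceP: (subvsP m) => g m_g.
apply/lfunP => z; rewrite zero_lfunE m_g Xinj_actE.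
case/AeP: (subvsP z) => x ->; rewrite mulrA.
have /memv_imgP[y _ ->] := phi_onto x.
by rewrite -(corner_restr_act y m_g) restr0 zero_lfunE.
Qed.

Lemma corner_restr_onto : limg corner_restr == fullv.
Proof.
rewrite eqEsubv subvf /=; apply/subvP => h _.
pose g : Xinj eb := (h \o phi^-1 \o linfun vsval)%VF.
have g_in : Xinj_act g (iota l 1) \in rep_space eb (iota l 1).
  by apply/rep_spaceP; exists g.
have -> : h = corner_restr (vsproj (rep_space eb (iota l 1)) (Xinj_act g (iota l 1))).
  apply/lfunP => y; rewrite (corner_restr_act y (vsprojK g_in)) !comp_lfunE lfunE /=.
  by rewrite vsprojK ?phi_Ae // lker0_lfunK.
exact: memv_img (memvf _).
Qed.

Lemma corner_restr_rep_act m a :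
  corner_restr (@rep_act k V A L iota eb l m a) = dual_act actN (corner_restr m) a.
Proof.
case/rep_spaceP: (subvsP m) => g m_g.
have act_in : Xinj_act (vsval m) (iota l a) \in rep_space eb (iota l 1).
  apply/rep_spaceP; exists (Xinj_act g (iota l a)).
  by rewrite m_g !Xinj_actM iota1l iota1r.
apply/lfunP => y; rewrite dual_actE // !corner_restrE /rep_act vsprojK //.
by rewrite Xinj_actE vsprojK ?phi_Ae // phi_actN.
Qed.

Lemma rep_space_dual_iso : rmod_iso (@rep_act k V A L iota eb l) (dual_act actN).
Proof.
exists corner_restr; split; last exact: corner_restr_rep_act.
exact: lker0_limgf_bij corner_restr_lker0 corner_restr_onto.
Qed.

End CornerDual.

Lemma rep_space_iso_DAe (i : V) (e : A i) : acyclic src tgt ->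
  rmod_iso (@rep_act k V A L iota (iota i e) i) (@DAe_act k (A i) e).
Proof.
move=> acyc.
pose actN (a : A i) (y : subvs_of (Ae e)) := vsproj (Ae e) (a * vsval y).
pose phi : 'Hom(subvs_of (Ae e), L) := (linfun (iota i) \o linfun vsval)%VF.
have phiE y : phi y = iota i (vsval y) by rewrite comp_lfunE !lfunE.
apply: (rep_space_dual_iso (actN := actN) (phi := phi)).
- by move=> a c y1 y2; rewrite /actN linearP /= mulrDr -scalerAr linearP.
- by apply/lker0P => y1 y2; rewrite !phiE => /iota_inj /val_inj.
- by move=> a y; rewrite !phiE vsprojK ?iotaM // memv_Ae_mull ?subvsP.
- by move=> y; rewrite phiE; case/AeP: (subvsP y) => x ->; rewrite iotaM memv_mul_Ae.
- by move=> y; rewrite phiE iota1l.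
apply: corner_mem => s a s_in s_end a_in.
have s0 : s = [::] := acyc _ _ (quiver_paths_ok s_in) s_end; subst s.
case/mapP: a_in => x _ ->; rewrite iota1l -iotaM -(vsprojK (memv_mul_Ae e x)) -phiE.
exact: memv_img (memvf _).
Qed.

Lemma rep_space_eq0 (i l : V) (e : A i) :
  ~ (exists s, path_ok src tgt l s && (path_end tgt l s == i)) ->
  rep_space (iota i e) (iota l 1) = 0%VS.
Proof.
move=> no_path.
have corner0 x : iota l 1 * x * iota i e \in (0%VS : {vspace L}).
  apply: corner_mem => s a s_in s_end a_in.
  by case: no_path; exists s; rewrite (quiver_paths_ok s_in) s_end eqxx.
apply/eqP; rewrite -subv0; apply/subvP => f /rep_spaceP[g ->].
rewrite memv0; apply/eqP/lfunP => z; rewrite Xinj_actE zero_lfunE.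
case/AeP: (subvsP z) => x ->; rewrite mulrA.
by move: (corner0 x); rewrite memv0 => /eqP ->; rewrite !linear0.
Qed.

Section Sandwich.
Variables (l i : V) (Q : seq L).

Definition sandwich d (Z : d.-tuple (A i)) (y : {ffun 'I_(size Q) * 'I_d -> A l}) : L :=
  \sum_(p < size Q) \sum_(c < d) iota l (y (p, c)) * Q`_p * iota i Z`_c.
Arguments sandwich {d} Z y.

Lemma sandwich_linear d (Z : d.-tuple (A i)) : linear (sandwich Z).
Proof.
move=> t y1 y2; rewrite /sandwich scaler_sumr -big_split; apply: eq_bigr => p _.
rewrite scaler_sumr -big_split; apply: eq_bigr => c _.
by rewrite !ffunE linearP /= !mulrDl -!scalerAl.
Qed.

Lemma sandwich_delta d (Z : d.-tuple (A i)) pc x :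
  sandwich Z [ffun pc' => if pc' == pc then x else 0] = iota l x * Q`_pc.1 * iota i Z`_pc.2.
Proof.
case: pc => p c; rewrite /sandwich pair_bigA /= (bigD1 (p, c)) //= ffunE eqxx big1 ?addr0 //.
by move=> [p' c'] /= pc'_neq; rewrite ffunE (negbTE pc'_neq) linear0 !mul0r.
Qed.

Lemma sandwich_inj_basis (S : seq L) : free S ->
  size S = (\dim {:A l} * size Q * \dim {:A i})%N ->
  (forall a, a \in S -> exists x q z,
     [/\ q \in Q, z \in vbasis {:A i} & a = iota l x * q * iota i z]) ->
  forall y, sandwich (vbasis {:A i}) y = 0 -> y = 0.
Proof.
move=> S_free S_size S_sub.
pose Phi := linfun (sandwich (vbasis {:A i})).
have PhiE y : Phi y = sandwich (vbasis {:A i}) y.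
  by rewrite linfun_linearE //; apply: sandwich_linear.
have S_img : (<<S>> <= limg Phi)%VS.
  apply/span_subvP => a /S_sub[x [q [z [q_in z_in ->]]]].
  have p_lt : (index q Q < size Q)%N by rewrite index_mem.
  have c_lt : (index z (vbasis {:A i}) < \dim {:A i})%N.
    by rewrite -[X in (_ < X)%N](size_tuple (vbasis {:A i})) index_mem.
  have -> : iota l x * q * iota i z =
      Phi [ffun pc => if pc == (Ordinal p_lt, Ordinal c_lt) then x else 0].
    by rewrite PhiE sandwich_delta /= !nth_index.
  exact: memv_img (memvf _).
have dim_dom : \dim {:{ffun 'I_(size Q) * 'I_(\dim {:A i}) -> A l}} =
    (size Q * \dim {:A i} * dim (A l))%N.
  by rewrite dimvf /dim /= card_prod !card_ord.
(* rank-nullity: the free family S lies in limg Phi and has the size of the domain *)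
have : \dim (lker Phi) = 0%N.
  have := limg_ker_dim Phi fullv; have := dimvS S_img.
  rewrite capfv dim_dom (eqnP S_free) S_size.
  move=> le_img dim_sum; apply/eqP; rewrite -leqn0 -(leq_add2r (\dim (limg Phi))) dim_sum.
  by apply: (leq_trans _ le_img); rewrite !dimvf mulnC mulnA.
move/eqP; rewrite dimv_eq0 => /eqP Phi_ker0 y Phi_y0.
by apply/eqP; rewrite -memv0 -Phi_ker0 memv_ker PhiE Phi_y0.
Qed.

Lemma sandwich_inj_free d (Z : d.-tuple (A i)) : free Z ->
  (forall y, sandwich (vbasis {:A i}) y = 0 -> y = 0) ->
  forall y, sandwich Z y = 0 -> y = 0.
Proof.
move=> Z_free basis_inj y y0.
pose y' := [ffun pc : 'I_(size Q) * 'I_(\dim {:A i}) =>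
  \sum_(c < d) coord (vbasis {:A i}) pc.2 Z`_c *: y (pc.1, c)].
have y'E : sandwich (vbasis {:A i}) y' = sandwich Z y.
  apply: eq_bigr => p _; under eq_bigr => c' _ do rewrite ffunE /= linear_sum !mulr_suml.
  rewrite exchange_big /=; apply: eq_bigr => c _.
  rewrite [Z`_c in RHS](coord_vbasis (memvf _)) linear_sum mulr_sumr.
  by apply: eq_bigr => c' _; rewrite !linearZ /= -!scalerAl -scalerAr.
have /ffunP y'0 := basis_inj _ (etrans y'E y0).
apply/ffunP => -[p c]; rewrite ffunE.
apply: (free_tensor_eq0 (f := fun c => y (p, c)) Z_free) => c'.
by have := y'0 (p, c'); rewrite !ffunE.
Qed.

End Sandwich.

Definition paths_to (l i : V) : seq (V * seq E) :=
  [seq x <- quiver_paths | (x.1 == l) && (path_end tgt x.1 x.2 == i)].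

Lemma mem_paths_to l i v s : ((v, s) \in paths_to l i) =
  [&& v == l, path_end tgt v s == i & (v, s) \in quiver_paths].
Proof. by rewrite mem_filter andbA. Qed.

Lemma path_end_nonnil l i s : path_end tgt l s = i -> l != i -> s != [::].
Proof. by move=> s_end; apply: contraNneq => s0; rewrite -s_end s0. Qed.

Definition middles_to (l i : V) : seq L := flatten [seq middles x.2 | x <- paths_to l i].

Lemma size_middles_to l i : size (middles_to l i) =
  (\sum_(n < #|V|) \sum_(t : n.-tuple E | path_ok src tgt l t && (path_end tgt l t == i))
     \prod_(b <- take n.-1 t) \dim {:A (tgt b)})%N.
Proof.
pose P (x : V * seq E) := (x.1 == l) && (path_end tgt x.1 x.2 == i).
pose cnt r := (\sum_(x <- r | P x) size (middles x.2))%N.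
have cnt_cat : {morph cnt : r r' / r ++ r' >-> r + r'}%N by move=> r r'; rewrite /cnt big_cat.
have cnt_nil : cnt [::] = 0%N by rewrite /cnt big_nil.
rewrite size_flatten /shape -map_comp sumnE big_map big_filter.
rewrite -/(cnt quiver_paths) /quiver_paths (big_morph cnt cnt_cat cnt_nil).
rewrite [LHS](bigD1 l) // /= [X in (_ + X)%N]big1 ?addn0 => [|v v_neq]; last first.
  rewrite (big_morph cnt cnt_cat cnt_nil) big1 // => n _.
  rewrite (big_morph cnt cnt_cat cnt_nil) big1 // => t _.
  by rewrite /cnt big_cons big_nil /P /= (negbTE v_neq).
rewrite (big_morph cnt cnt_cat cnt_nil); apply: eq_bigr => n _.
rewrite (big_morph cnt cnt_cat cnt_nil) big_mkcondr; apply: eq_bigr => t _.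
rewrite /cnt big_cons big_nil /P /= eqxx /=.
by case: ifP => _; rewrite ?addn0 // size_middles size_tuple.
Qed.

Definition path_sandwich (l i : V) (e : A i) :
    'Hom({ffun 'I_(size (middles_to l i)) * 'I_(\dim (Ae e)) -> A l}, L) :=
  linfun (sandwich (l := l) (vbasis (Ae e))).

Lemma path_sandwichE l i (e : A i) y :
  path_sandwich l e y = sandwich (l := l) (vbasis (Ae e)) y.
Proof. by rewrite linfun_linearE //; apply: sandwich_linear. Qed.

Lemma path_sandwich_lker0 l i (e : A i) : l != i -> lker (path_sandwich l e) == 0%VS.
Proof.
move=> li.
suff inj y : sandwich (l := l) (Q := middles_to l i) (vbasis (Ae e)) y = 0 -> y = 0.
  by rewrite -subv0; apply/subvP => y; rewrite memv_ker memv0 path_sandwichE => /eqP/inj->.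
apply: (sandwich_inj_free (basis_free (vbasisP _))).
apply: (sandwich_inj_basis (S := flatten (map apaths_of (paths_to l i)))).
- exact/free_flatten_map_filter/basis_free/apaths_basis.
- rewrite /middles_to !size_flatten /shape -!map_comp !sumnE !big_map.
  rewrite big_distrr big_distrl /=; apply: eq_big_seq => -[v s].
  rewrite mem_paths_to => /and3P[/eqP-> /eqP s_end _].
  by rewrite /apaths_of size_apaths ?s_end // (path_end_nonnil s_end li).
move=> a /flatten_mapP[[v s]]; rewrite mem_paths_to => /and3P[/eqP-> /eqP s_end s_in] a_in.
have [x [z [q [_ q_in z_in ->]]]] := mem_apaths s_end (path_end_nonnil s_end li) a_in.
exists x, q, z; split => //; apply/flatten_mapP; exists (l, s) => //.
by rewrite mem_paths_to eqxx s_end eqxx.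
Qed.

Lemma corner_sub_path_sandwich l i (e : A i) : l != i ->
  forall x, iota l 1 * x * iota i e \in limg (path_sandwich l e).
Proof.
move=> li; apply: corner_mem => s a s_in s_end a_in.
have [x [z [q [_ q_in _ ->]]]] := mem_apaths s_end (path_end_nonnil s_end li) a_in.
rewrite !mulrA iota1l -(mulrA _ (iota i z)) -iotaM.
have q_to : q \in middles_to l i.
  by apply/flatten_mapP; exists (l, s); rewrite // mem_paths_to eqxx s_end eqxx.
have p_lt : (index q (middles_to l i) < size (middles_to l i))%N by rewrite index_mem.
rewrite (coord_vbasis (memv_mul_Ae e z)) linear_sum mulr_sumr; apply: memv_suml => c _.
rewrite linearZ /= -scalerAr; apply: memvZ.
have -> : iota l x * q * iota i (vbasis (Ae e))`_c =
    path_sandwich l e [ffun pc => if pc == (Ordinal p_lt, c) then x else 0].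
  by rewrite path_sandwichE sandwich_delta /= nth_index.
exact: memv_img (memvf _).
Qed.

Lemma path_sandwich_lmul l i (e : A i) a y :
  path_sandwich l e (ffun_lmul a y) = iota l a * path_sandwich l e y.
Proof.
rewrite !path_sandwichE /sandwich mulr_sumr; apply: eq_bigr => p _.
by rewrite mulr_sumr; apply: eq_bigr => c _; rewrite !ffunE iotaM !mulrA.
Qed.

Lemma path_sandwich_Ae l i (e : A i) y : path_sandwich l e y \in Ae (iota i e).
Proof.
rewrite path_sandwichE; apply: memv_suml => p _; apply: memv_suml => c _.
have /AeP[x ->] : (vbasis (Ae e))`_c \in Ae e.
  by apply/vbasis_mem/mem_nth; rewrite size_tuple.
by rewrite iotaM mulrA memv_mul_Ae.
Qed.

Lemma path_sandwich_corner l i (e : A i) y :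
  iota l 1 * path_sandwich l e y = path_sandwich l e y.
Proof.
rewrite path_sandwichE /sandwich mulr_sumr; apply: eq_bigr => p _.
by rewrite mulr_sumr; apply: eq_bigr => c _; rewrite !mulrA iota1l.
Qed.

Lemma rep_space_iso_DAn l i (e : A i) : l != i ->
  rmod_iso (@rep_act k V A L iota (iota i e) l)
    (@DAn_act k (A l) (mult_nl src tgt A l i (\dim {:DAe e}))).
Proof.
move=> li.
have -> : mult_nl src tgt A l i (\dim {:DAe e}) =
    #|{: 'I_(size (middles_to l i)) * 'I_(\dim (Ae e))}|.
  rewrite card_prod !card_ord size_middles_to dim_DAe /mult_nl big_distrl.
  by apply: eq_bigr => n _; rewrite big_distrl.
have iso_dual := rep_space_dual_iso (@ffun_lmul_linear k (A l) _) (path_sandwich_lker0 e li)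
  (@path_sandwich_lmul l i e) (@path_sandwich_Ae l i e) (@path_sandwich_corner l i e)
  (corner_sub_path_sandwich e li).
apply: (rmod_iso_trans iso_dual).
apply: (rmod_iso_trans (@dual_ffun_iso _ _ _)).
exact: ffun_reindex_card_iso.
Qed.

End GenPathAlgebra.

Theorem proposition5p7
  (k : closedFieldType) (V E : finType) (src tgt : E -> V)
  (Hacyc : acyclic src tgt)
  (A : V -> falgType k) (s : V -> nat) (e : forall v, 'I_(s v) -> A v)
  (He : forall v, complete_prim_idems (e v))
  (Hbasic : forall v, basic_wrt (e v))
  (L : falgType k) (iota : forall v, A v -> L) (arr : E -> L)
  (HL : gen_path_algebra src tgt iota arr)
  (i : V) (j : 'I_(s i)) :
  let eb := iota i (e i j) in
  rmod_iso (@rep_act k V A L iota eb i) (@DAe_act k (A i) (e i j))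
  /\
  (forall l : V, l != i ->
     rmod_iso (@rep_act k V A L iota eb l)
       (@DAn_act k (A l)
          (mult_nl src tgt A l i (\dim (fullv : {vspace DAe (e i j)})))))
  /\
  (forall l : V,
     ~ (exists t : seq E, path_ok src tgt l t && (path_end tgt l t == i)) ->
     rep_space eb (iota l 1) = 0%VS).
Proof.
move=> eb; split; first exact: (rep_space_iso_DAe HL (e i j) Hacyc).
split=> l; first exact: (rep_space_iso_DAn HL (e i j)).
exact: (rep_space_eq0 HL (e i j)).
Qed.
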